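(* If $q=p^{2r}$ where $p$ is an odd prime and $r\ge1$ is an integer, then $\chi(ER_q)\le 4\sqrt{q}+1$.
   Context: For a prime power $q$, $ER_q$ is the graph whose vertices are the points of $PG(2,q)$, i.e. the $1$-dimensional subspaces of $\mathbb{F}_q^3$, where distinct vertices $(x_0,x_1,x_2)$ and $(y_0,y_1,y_2)$ (homogeneous coordinates) are adjacent if and only if $x_0y_0+x_1y_1+x_2y_2=0$. $\chi$ denotes the chromatic number. *)

From HB Require Import structures.
From mathcomp Require Import all_boot all_order all_algebra all_field.
Set Implicit Arguments. Unset Strict Implicit. Unset Printing Implicit Defensive.
Import GRing.Theory.
Local Open Scope ring_scope.

Definition vec3 (F : finFieldType) := 'rV[F]_3.

Definition span1 (F : finFieldType) (v : 'rV[F]_3) : {set 'rV[F]_3} :=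
  [set a *: v | a : F].

Definition is_proj_point (F : finFieldType) (S : {set 'rV[F]_3}) : bool :=
  [exists v : 'rV[F]_3, (v != 0) && (S == span1 v)].

Definition PG2 (F : finFieldType) := {S : {set 'rV[F]_3} | is_proj_point S}.

Definition dot3 (F : finFieldType) (x y : 'rV[F]_3) : F :=
  \sum_(i < 3) x ord0 i * y ord0 i.

(* Adjacency in ER_q: distinct points whose (nonzero) representatives are
   orthogonal.  (Orthogonality does not depend on the representatives.) *)
Definition ER_adj (F : finFieldType) : rel (PG2 F) :=
  fun P Q => (P != Q) &&
    [exists x in val P, exists y in val Q,
        [&& x != 0, y != 0 & dot3 x y == 0]].

Definition colorable (T : finType) (e : rel T) (k : nat) : bool :=
  [exists f : {ffun T -> 'I_k}, [forall x, forall y, e x y ==> (f x != f y)]].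

(* The least k such that e is k-colourable (any loopless graph on T is
   #|T|-colourable, so the search range 0..#|T| suffices). *)
Definition chromatic_number (T : finType) (e : rel T) : nat :=
  find (colorable e) (iota 0 #|T|.+1).

From mathcomp Require Import all_boot all_order all_algebra all_field all_fingroup all_solvable.
From mathcomp Require Import zify ring.
Set Implicit Arguments. Unset Strict Implicit. Unset Printing Implicit Defensive.
Import GRing.Theory.
Local Open Scope ring_scope.

(* Let s = p^r, so that F = GF(s^2) has the involution x |-> x^s with fixed
   field GF(s).  Pick i with i^2 = -1 and use X = x0 + i x1, Y = x0 - i x1,
   Z = x2, in which 2 (x . y) = X Y' + Y X' + 2 Z Z'.  Isotropic points are
   pairwise non-orthogonal and share one colour.  A point with X <> 0 is
   described by a = Z/X and t = (x . x)/X^2, and two such points are orthogonal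
   iff t + t' = (a - a')^2.  Colour it by a - a^s together with a choice of sign
   of t - t^s: if the a-parts of orthogonal points agree then a - a' and hence
   t + t' lie in GF(s), so t - t^s and t' - t'^s are opposite and their signs
   differ unless t lies in GF(s); such t are first divided by a fixed square
   xi^2 outside GF(s).  All colour components lie in {w | w^s = -w}, a set of
   at most s elements, giving 1 + 2 * s * 2 colours. *)

Lemma card_roots_XnBcXm (F : finFieldType) (n m : nat) (c : F) : (m < n)%N ->
  (#|[set x : F | (x ^+ n == c * x ^+ m)%R]| <= n)%N.
Proof.
move=> lt_mn; set P : {poly F} := 'X^n - c *: 'X^m.
have szP : size P = n.+1.
  rewrite /P size_addl ?size_polyXn // size_polyN.
  by apply: leq_ltn_trans (size_scale_leq _ _) _; rewrite size_polyXn ltnS.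
have P0 : P != 0 by rewrite -size_poly_eq0 szP.
rewrite cardE -ltnS -szP; apply: max_poly_roots P0 _ (enum_uniq _).
apply/allP => x; rewrite mem_enum inE => /eqP xE.
by rewrite /root /P !hornerE xE subrr.
Qed.

Lemma exists_sqrt_opp1 (F : finFieldType) : (4 %| #|F|.-1)%N ->
  exists i : F, i ^+ 2 = -1.
Proof.
move=> dvd4.
have /cyclicP [u defU] := field_unit_group_cyclic [set: {unit F}]%G.
have ou : #[u]%g = #|F|.-1 by rewrite orderE -defU card_finField_unit.
set n := (#|F|.-1 %/ 4)%N.
have ou4 : #[u]%g = (4 * n)%N by rewrite ou mulnC divnK.
have n_gt0 : (0 < n)%N.
  by rewrite lt0n; apply: contraTneq (order_gt0 u) => n0; rewrite ou4 n0.
set w := (u ^+ n)%g.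
have ow : #[w]%g = 4%N by rewrite orderXdiv ou4 ?dvdn_mull // mulnK.
exists (val w); have : (val w ^+ 2) ^+ 2 = 1.
  by rewrite -exprM -FinRing.val_unitX -[(2 * 2)%N]/4%N -ow expg_order.
move/eqP; rewrite sqrf_eq1 => /orP [/eqP w2 | /eqP //].
have : (w ^+ 2 == 1)%g by apply/eqP/val_inj; rewrite FinRing.val_unitX w2.
by rewrite -order_dvdn ow.
Qed.

Lemma dvdn4_odd_sqr_pred (s : nat) : odd s -> (4 %| (s * s).-1)%N.
Proof.
move=> s_odd; have [k ->] : exists k, s = k.*2.+1.
  by exists s./2; rewrite -[LHS]odd_double_half s_odd.
by apply/dvdnP; exists (k * k.+1); nia.
Qed.

Lemma exists_square_not_fixed (F : finFieldType) (s : nat) :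
  (2 < s)%N -> #|F| = (s * s)%N -> exists xi : F, (xi ^+ 2) ^+ s != xi ^+ 2.
Proof.
move=> s_gt2 cardF; apply/existsP; apply: contraT => /existsPn all_fixed.
have lt_2_2s : (2 < 2 * s)%N by lia.
have := card_roots_XnBcXm (1 : F) lt_2_2s.
have -> : [set x : F | (x ^+ (2 * s) == 1 * x ^+ 2)%R] = setT.
  by apply/setP => x; rewrite !inE mul1r mulnC exprM exprAC (negbNE (all_fixed x)).
by rewrite cardsT cardF leq_pmul2r ?(ltn_trans _ s_gt2) // leqNgt s_gt2.
Qed.

Section Frobenius.
Variables (F : finFieldType) (s : nat).
Hypotheses (s_pchar : [pchar F].-nat s) (cardF : #|F| = (s * s)%N).

Lemma frobD (x y : F) : (x + y) ^+ s = x ^+ s + y ^+ s.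
Proof. exact: exprDn_pchar. Qed.

Lemma frobN (x : F) : (- x) ^+ s = - x ^+ s.
Proof. exact: exprNn_pchar. Qed.

Lemma frobB (x y : F) : (x - y) ^+ s = x ^+ s - y ^+ s.
Proof. by rewrite frobD frobN. Qed.

Lemma frobK (x : F) : (x ^+ s) ^+ s = x.
Proof. by rewrite -exprM -cardF expf_card. Qed.

End Frobenius.

(* Selects one element of each 2-cycle {x, f x} of an involution f. *)
Definition orbit_side (T : finType) (f : T -> T) (x : T) : bool :=
  (enum_rank x < enum_rank (f x))%N.

Lemma orbit_side_fixed (T : finType) (f : T -> T) (x : T) : involutive f ->
  orbit_side f x = orbit_side f (f x) -> f x = x.
Proof.
move=> fK; rewrite /orbit_side fK => eq_side.
apply: enum_rank_inj; apply: val_inj => /=.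
by case: ltngtP eq_side.
Qed.

Lemma row3P (R : Type) (x y : 'rV[R]_3) :
  x 0 0 = y 0 0 -> x 0 1 = y 0 1 -> x 0 2 = y 0 2 -> x = y.
Proof.
move=> e0 e1 e2; apply/rowP => j.
case: j => [[|[|[|//]]] lt_j3].
- by rewrite (_ : Ordinal lt_j3 = 0) //; apply/val_inj.
- by rewrite (_ : Ordinal lt_j3 = 1) //; apply/val_inj.
- by rewrite (_ : Ordinal lt_j3 = 2) //; apply/val_inj.
Qed.

Lemma dot3E (F : finFieldType) (x y : 'rV[F]_3) :
  dot3 x y = x 0 0 * y 0 0 + x 0 1 * y 0 1 + x 0 2 * y 0 2.
Proof.
rewrite /dot3 !big_ord_recr big_ord0 /= add0r.
by congr (_ * _ + _ * _ + _ * _); congr (_ _ _); apply/val_inj.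
Qed.

Lemma dot3C (F : finFieldType) (x y : 'rV[F]_3) : dot3 x y = dot3 y x.
Proof. by rewrite !dot3E; ring. Qed.

Lemma dot3Z (F : finFieldType) (a b : F) (x y : 'rV[F]_3) :
  dot3 (a *: x) (b *: y) = a * b * dot3 x y.
Proof. by rewrite !dot3E !mxE; ring. Qed.

Section IsotropicCoordinates.
Variables (F : finFieldType) (i : F).
Hypotheses (sqr_i : i ^+ 2 = -1) (two_neq0 : 2%:R != 0 :> F).

Definition xc (v : 'rV[F]_3) := v 0 0 + i * v 0 1.
Definition yc (v : 'rV[F]_3) := v 0 0 - i * v 0 1.
Definition zc (v : 'rV[F]_3) := v 0 2.

Lemma sqrt_opp1_neq0 : i != 0.
Proof. by apply: contra_eq_neq sqr_i => ->; rewrite expr0n eq_sym oppr_eq0 oner_neq0. Qed.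

Lemma dot3_xyz v w :
  2%:R * dot3 v w = xc v * yc w + yc v * xc w + 2%:R * (zc v * zc w).
Proof.
rewrite dot3E /xc /yc /zc.
have -> : (v 0 0 + i * v 0 1) * (w 0 0 - i * w 0 1) + (v 0 0 - i * v 0 1) * (w 0 0 + i * w 0 1)
   = 2%:R * (v 0 0 * w 0 0) - 2%:R * i ^+ 2 * (v 0 1 * w 0 1) by ring.
by rewrite sqr_i; ring.
Qed.

Lemma dot3_self v : dot3 v v = xc v * yc v + zc v ^+ 2.
Proof. by apply: (mulfI two_neq0); rewrite dot3_xyz; ring. Qed.

Lemma scale_of_xyz v w l :
  xc w = l * xc v -> yc w = l * yc v -> zc w = l * zc v -> w = l *: v.
Proof.
move=> xw yw zw.
have c0E (u : 'rV[F]_3) : u 0 0 = (xc u + yc u) / 2%:R.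
  by apply: (mulIf two_neq0); rewrite divfK // /xc /yc; ring.
have two_i_neq0 : 2%:R * i != 0 by rewrite mulf_neq0 ?sqrt_opp1_neq0.
have c1E (u : 'rV[F]_3) : u 0 1 = (xc u - yc u) / (2%:R * i).
  by apply: (mulIf two_i_neq0); rewrite divfK // /xc /yc; ring.
apply: row3P; rewrite !mxE.
- by rewrite !c0E xw yw; field.
- by rewrite !c1E xw yw; field; rewrite sqrt_opp1_neq0.
- exact: zw.
Qed.

Lemma xyz_eq0 v : xc v = 0 -> yc v = 0 -> zc v = 0 -> v = 0.
Proof. by move=> x0 y0 z0; rewrite -(scale0r v); apply: scale_of_xyz; rewrite mul0r. Qed.

Lemma isotropic_orthogonal_scale (v w : 'rV[F]_3) : v != 0 -> w != 0 ->
  dot3 v v = 0 -> dot3 w w = 0 -> dot3 v w = 0 -> exists l, w = l *: v.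
Proof.
move=> v0 w0; rewrite !dot3_self => vv ww.
move/(congr1 ( *%R 2%:R)); rewrite dot3_xyz mulr0 => vw.
have [xv0 | xv_neq0] := eqVneq (xc v) 0.
  have zv0 : zc v = 0 by apply/eqP; rewrite -sqrf_eq0 -vv xv0 mul0r add0r.
  have yv_neq0 : yc v != 0 by apply: contra_neq v0 => yv0; apply: xyz_eq0.
  have xw0 : xc w = 0.
    move: vw; rewrite xv0 zv0 !mul0r mulr0 add0r addr0 => /eqP.
    by rewrite mulf_eq0 (negPf yv_neq0) => /eqP.
  have zw0 : zc w = 0 by apply/eqP; rewrite -sqrf_eq0 -ww xw0 mul0r add0r.
  by exists (yc w / yc v); apply: scale_of_xyz; rewrite ?xv0 ?xw0 ?zv0 ?zw0 ?mulr0 ?divfK.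
have zwE : zc w = xc w / xc v * zc v.
  have : (xc v * zc w - xc w * zc v) ^+ 2 =
      xc v ^+ 2 * (xc w * yc w + zc w ^+ 2) + xc w ^+ 2 * (xc v * yc v + zc v ^+ 2)
      - xc v * xc w * (xc v * yc w + yc v * xc w + 2%:R * (zc v * zc w)) by ring.
  rewrite ww vv vw !mulr0 addr0 subr0 => /eqP; rewrite expf_eq0 /= subr_eq0 => /eqP zwxv.
  by apply: (mulfI xv_neq0); rewrite zwxv; field.
have yvE : yc v = - zc v ^+ 2 / xc v.
  by apply: (mulfI xv_neq0); rewrite [RHS]mulrC divfK //; apply/eqP; rewrite -addr_eq0 vv.
have ywE : yc w = - (yc v * xc w + 2%:R * (zc v * zc w)) / xc v.
  apply: (mulfI xv_neq0); rewrite [RHS]mulrC divfK //.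
  by apply/eqP; rewrite -addr_eq0 addrA vw.
exists (xc w / xc v); apply: scale_of_xyz; rewrite ?divfK //.
by rewrite ywE yvE zwE; field.
Qed.

Definition chart_a v := zc v / xc v.
Definition chart_t v := dot3 v v / xc v ^+ 2.

Lemma dot3_chart v w : xc v != 0 -> xc w != 0 ->
  2%:R * dot3 v w = (chart_t v + chart_t w - (chart_a v - chart_a w) ^+ 2) * (xc v * xc w).
Proof.
by move=> xv xw; rewrite dot3_xyz /chart_t /chart_a !dot3_self; field; rewrite xv xw.
Qed.

End IsotropicCoordinates.

Section Colouring.
Variables (F : finFieldType) (s : nat) (i xi : F).
Hypotheses (s_pchar : [pchar F].-nat s) (cardF : #|F| = (s * s)%N).
Hypotheses (sqr_i : i ^+ 2 = -1) (two_neq0 : 2%:R != 0 :> F).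
Hypothesis xi2_not_fixed : (xi ^+ 2) ^+ s != xi ^+ 2.

Local Notation xc := (xc i).
Local Notation chart_a := (chart_a i).
Local Notation chart_t := (chart_t i).
Local Notation sign := (orbit_side (@GRing.opp F)).

Definition skew (x : F) := x - x ^+ s.

(* Dividing a by xi and t by xi^2 preserves t + t' = (a - a')^2. *)
Definition chart_colour (a t : F) : bool * F * bool :=
  if t ^+ s == t then (false, skew (a / xi), sign (skew (t / xi ^+ 2)))
  else (true, skew a, sign (skew t)).

(* A point v with X = 0 is orthogonal to a chart point exactly when the latter
   has a = -Y/(2Z); the middle entry is chosen to differ from skew a. *)
Definition axis_colour (v : 'rV[F]_3) : bool * F * bool :=
  let a := - yc i v / (2%:R * zc v) in
  (true, if skew a == 0 then skew (xi ^+ 2) else 0, true).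

Definition colour (v : 'rV[F]_3) : option (bool * F * bool) :=
  if dot3 v v == 0 then None
  else if xc v == 0 then Some (axis_colour v)
  else Some (chart_colour (chart_a v) (chart_t v)).

Lemma skew_eq0 x : (skew x == 0) = (x ^+ s == x).
Proof. by rewrite subr_eq0 eq_sym. Qed.

Lemma sqr_fixed_of_skew_eq a a' : skew a = skew a' ->
  ((a - a') ^+ 2) ^+ s = (a - a') ^+ 2.
Proof.
move=> eq_skew; rewrite -exprAC (frobB s_pchar); congr (_ ^+ 2).
have -> : a ^+ s - a' ^+ s = a - a' - (skew a - skew a') by rewrite /skew; ring.
by rewrite eq_skew subrr subr0.
Qed.

Lemma fixed_of_sign_skew t t' : (t + t') ^+ s = t + t' ->
  sign (skew t) = sign (skew t') -> t ^+ s = t.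
Proof.
move=> fixed_sum.
have skew_sum : skew t + skew t' = 0.
  by rewrite /skew addrACA -opprD -(frobD s_pchar) fixed_sum subrr.
have -> : skew t' = - skew t by apply/eqP; rewrite -addr_eq0 addrC skew_sum.
move/(orbit_side_fixed opprK)/eqP.
rewrite eq_sym -addr_eq0 -mulr2n -mulr_natr mulf_eq0 (negPf two_neq0) orbF.
by rewrite skew_eq0 => /eqP.
Qed.

Lemma xi_neq0 : xi != 0.
Proof.
apply: contraNneq xi2_not_fixed => ->.
by rewrite expr0n expr0n gtn_eqF //; case/andP: s_pchar.
Qed.

Lemma chart_colour_orth a t a' t' : t != 0 -> t + t' = (a - a') ^+ 2 ->
  chart_colour a t != chart_colour a' t'.
Proof.
move=> t_neq0 orth; rewrite /chart_colour.
case: ifP => t_fixed; case: ifP => t'_fixed //; apply/eqP; case=> eq_skew eq_sign.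
  have orth' : t / xi ^+ 2 + t' / xi ^+ 2 = (a / xi - a' / xi) ^+ 2.
    by rewrite -mulrDl orth; field; apply: xi_neq0.
  have sum_fixed : (t / xi ^+ 2 + t' / xi ^+ 2) ^+ s = t / xi ^+ 2 + t' / xi ^+ 2.
    by rewrite orth' sqr_fixed_of_skew_eq.
  have := fixed_of_sign_skew sum_fixed eq_sign.
  rewrite expr_div_n (eqP t_fixed) => /(mulfI t_neq0)/invr_inj.
  by apply/eqP.
have sum_fixed : (t + t') ^+ s = t + t' by rewrite orth sqr_fixed_of_skew_eq.
by move: (fixed_of_sign_skew sum_fixed eq_sign) => /eqP; rewrite t_fixed.
Qed.

Lemma chart_axis_colour_neq v w : xc v != 0 -> xc w = 0 -> zc w != 0 -> dot3 v w = 0 ->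
  chart_colour (chart_a v) (chart_t v) != axis_colour w.
Proof.
move=> xv xw zw vw.
have ywE : yc i w = - (2%:R * (zc v * zc w)) / xc v.
  have := dot3_xyz sqr_i v w; rewrite vw xw !mulr0 addr0 => /esym/eqP.
  by rewrite addr_eq0 => /eqP <-; field.
have -> : chart_a v = - yc i w / (2%:R * zc w).
  by rewrite ywE /chart_a; field; rewrite zw two_neq0 xv.
rewrite /chart_colour /axis_colour; case: ifP => // _.
have [-> | skew_neq0] := eqVneq (skew (- yc i w / (2%:R * zc w))) 0.
  by apply/eqP; case=> /eqP; rewrite eq_sym skew_eq0 (negPf xi2_not_fixed).
by apply/eqP; case=> /eqP; rewrite (negPf skew_neq0).
Qed.

Lemma colour_anisotropic_orth v w : dot3 v v != 0 -> dot3 w w != 0 -> dot3 v w = 0 ->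
  colour v != colour w.
Proof.
move=> vv ww vw; rewrite /colour (negPf vv) (negPf ww).
have axis_zc u : xc u = 0 -> dot3 u u != 0 -> zc u != 0.
  rewrite (dot3_self sqr_i two_neq0) => ->; rewrite mul0r add0r.
  by apply: contraNneq => ->; rewrite expr0n.
have [xv0 | xv] := eqVneq (xc v) 0; have [xw0 | xw] := eqVneq (xc w) 0.
- have := dot3_xyz sqr_i v w; rewrite vw xv0 xw0 !mul0r !mulr0 !add0r => /esym/eqP.
  by rewrite !mulf_eq0 (negPf two_neq0) (negPf (axis_zc _ xv0 vv)) (negPf (axis_zc _ xw0 ww)).
- apply/eqP; case=> /esym/eqP; apply/negP.
  by apply: chart_axis_colour_neq; rewrite ?axis_zc // dot3C.
- by apply/eqP; case=> /eqP; apply/negP; apply: chart_axis_colour_neq; rewrite ?axis_zc.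
apply/eqP; case=> /eqP; apply/negP; apply: chart_colour_orth.
  by rewrite /chart_t mulf_neq0 ?invr_eq0 ?expf_neq0.
have := dot3_chart sqr_i two_neq0 xv xw; rewrite vw mulr0 => /esym/eqP.
by rewrite mulf_eq0 mulf_eq0 (negPf xv) (negPf xw) !orbF subr_eq0 => /eqP.
Qed.

Lemma colour_orth_scale v w : v != 0 -> w != 0 -> dot3 v w = 0 ->
  colour v = colour w -> exists l, w = l *: v.
Proof.
move=> v0 w0 vw eq_colour.
have isotropicE u : (colour u == None) = (dot3 u u == 0).
  by rewrite /colour; case: ifP => //; case: ifP.
have [vv | vv] := eqVneq (dot3 v v) 0.
  apply: (isotropic_orthogonal_scale sqr_i two_neq0) => //.
  by apply/eqP; rewrite -isotropicE -eq_colour isotropicE vv.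
have ww : dot3 w w != 0 by rewrite -isotropicE -eq_colour isotropicE.
by move/eqP: eq_colour; rewrite (negPf (colour_anisotropic_orth vv ww vw)).
Qed.

Definition anti_fixed : {set F} := [set w : F | (w ^+ s == -1 * w ^+ 1)%R].

Definition palette : {set option (bool * F * bool)} :=
  None |: [set Some c | c in setX (setX [set: bool] anti_fixed) [set: bool]].

Lemma s_gt1 : (1 < s)%N.
Proof.
case: s s_pchar xi2_not_fixed => [|[|//]]; first by case/andP.
by rewrite expr1 eqxx.
Qed.

Lemma skew_anti_fixed x : skew x \in anti_fixed.
Proof. by rewrite inE (frobB s_pchar) (frobK cardF) expr1 mulN1r opprB. Qed.

Lemma colour_in_palette v : colour v \in palette.
Proof.
have some_in b w g : w \in anti_fixed -> Some (b, w, g) \in palette.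
  move=> w_in; apply/setU1P; right; apply/imsetP.
  by exists (b, w, g); rewrite ?in_setX ?in_setT ?w_in.
rewrite /colour /axis_colour /chart_colour; case: ifP => _; first exact: setU11.
case: ifP => _; last by case: ifP => _; apply: some_in; apply: skew_anti_fixed.
apply: some_in; case: ifP => _; first exact: skew_anti_fixed.
by rewrite inE expr0n gtn_eqF ?(ltnW s_gt1) // mulr0.
Qed.

Lemma card_palette : (#|palette| <= 4 * s + 1)%N.
Proof.
have card_anti_fixed : (#|anti_fixed| <= s)%N := card_roots_XnBcXm (-1) s_gt1.
rewrite cardsU1; apply: leq_trans (leq_add (leq_b1 _) (leq_imset_card _ _)) _.
rewrite !cardsX !cardsT card_bool addnC leq_add2r mulnC mulnA.
by rewrite leq_mul2l card_anti_fixed orbT.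
Qed.

End Colouring.

Lemma chromatic_number_le (T : finType) (e : rel T) (k : nat) :
  colorable e k -> (chromatic_number e <= k)%N.
Proof.
move=> colorable_k; rewrite /chromatic_number.
have [le_k_T | lt_T_k] := leqP k #|T|; last by rewrite (leq_trans (find_size _ _)) ?size_iota.
rewrite leqNgt; apply/negP => /(before_find 0%N).
by rewrite nth_iota ?ltnS // add0n colorable_k.
Qed.

Lemma colorable_of_colouring (T C : finType) (e : rel T) (f : T -> C) (S : {set C}) :
  T -> (forall x, f x \in S) -> (forall x y, e x y -> f x != f y) -> colorable e #|S|.
Proof.
move=> x0 fS proper; apply/existsP; exists [ffun x => enum_rank_in (fS x0) (f x)].
apply/forallP => x; apply/forallP => y; apply/implyP => exy; rewrite !ffunE.
by apply: contra (proper _ _ exy) => /eqP/(enum_rank_in_inj (fS x) (fS y)) ->.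
Qed.

Section ProjectivePlane.
Variable F : finFieldType.

Lemma PG2_span1P (P : PG2 F) : [exists v, (v != 0) && (val P == span1 v)].
Proof. exact: valP P. Qed.

Definition rep (P : PG2 F) : 'rV[F]_3 := xchoose (existsP (PG2_span1P P)).

Lemma rep_neq0 (P : PG2 F) : rep P != 0.
Proof. by case/andP: (xchooseP (existsP (PG2_span1P P))). Qed.

Lemma span1_rep (P : PG2 F) : val P = span1 (rep P).
Proof. by case/andP: (xchooseP (existsP (PG2_span1P P))) => _ /eqP. Qed.

Lemma span1Z (v : 'rV[F]_3) (l : F) : l != 0 -> span1 (l *: v) = span1 v.
Proof.
move=> l_neq0; apply/setP => x; apply/imsetP/imsetP => [[a _ ->] | [a _ ->]].
  by exists (a * l) => //; rewrite scalerA.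
by exists (a / l) => //; rewrite scalerA divfK.
Qed.

Lemma ER_adj_dot3 (P Q : PG2 F) : ER_adj P Q -> dot3 (rep P) (rep Q) = 0.
Proof.
case/andP=> _ /existsP [x /andP [xP /existsP [y /andP [yQ /and3P [x0 y0 /eqP xy]]]]].
move: xP yQ; rewrite !span1_rep => /imsetP [a _ xE] /imsetP [b _ yE].
move: xy x0 y0; rewrite xE yE dot3Z => /eqP; rewrite !mulf_eq0 -!orbA.
by case/or3P => /eqP-> //; rewrite scale0r eqxx.
Qed.

Lemma ER_adj_not_scale (P Q : PG2 F) (l : F) : ER_adj P Q -> rep Q != l *: rep P.
Proof.
case/andP=> /eqP neqPQ _; apply/eqP => repQE; apply: neqPQ; apply: val_inj.
have l_neq0 : l != 0 by apply: contraTneq (rep_neq0 Q) => l0; rewrite repQE l0 scale0r eqxx.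
by rewrite !span1_rep repQE span1Z.
Qed.

Lemma ER_adj_proper (C : eqType) (c : 'rV[F]_3 -> C) :
    (forall v w, v != 0 -> w != 0 -> dot3 v w = 0 -> c v = c w -> exists l, w = l *: v) ->
  forall P Q, ER_adj P Q -> c (rep P) != c (rep Q).
Proof.
move=> c_scale P Q adj; apply/eqP => eq_c.
have [l repQE] := c_scale _ _ (rep_neq0 P) (rep_neq0 Q) (ER_adj_dot3 adj) eq_c.
by move/eqP: (ER_adj_not_scale l adj).
Qed.

Lemma span1_const1_proj : is_proj_point (span1 (const_mx 1 : 'rV[F]_3)).
Proof.
apply/existsP; exists (const_mx 1); rewrite eqxx andbT.
by apply/eqP => /rowP /(_ 0); rewrite !mxE => /eqP; rewrite oner_eq0.
Qed.

End ProjectivePlane.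

Theorem mainTheorem2 (p r : nat) (F : finFieldType) :
  prime p -> odd p -> (0 < r)%N -> #|F| = (p ^ (2 * r))%N ->
  (chromatic_number (@ER_adj F) <= 4 * p ^ r + 1)%N.
Proof.
move=> p_prime p_odd r_gt0 cardF; set s := (p ^ r)%N.
have p_char : p \in [pchar F] := card_finPcharP cardF p_prime.
have s_pchar : [pchar F].-nat s by rewrite pnatX (pnatE _ p_prime) p_char.
have cardFs : #|F| = (s * s)%N by rewrite cardF -expnD addnn -mul2n.
have two_neq0 : 2%:R != 0 :> F.
  by rewrite -(dvdn_pcharf p_char) dvdn_prime2 //; apply: contraTneq (p_odd) => ->.
have s_gt2 : (2 < s)%N.
  have p_gt2 : (2 < p)%N.
    by rewrite ltn_neqAle prime_gt1 // andbT; apply: contraTneq (p_odd) => <-.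
  apply: leq_trans p_gt2 _; rewrite -{1}(expn1 p).
  exact: leq_pexp2l (prime_gt0 p_prime) r_gt0.
have [i sqr_i] : exists i : F, i ^+ 2 = -1.
  by apply: exists_sqrt_opp1; rewrite cardFs dvdn4_odd_sqr_pred // /s oddX p_odd orbT.
have [xi xi2_not_fixed] := exists_square_not_fixed s_gt2 cardFs.
apply: leq_trans _ (card_palette s_pchar xi2_not_fixed).
have in_palette P := colour_in_palette i s_pchar cardFs xi2_not_fixed (rep P).
apply/chromatic_number_le/(colorable_of_colouring (Sub _ (span1_const1_proj F)) in_palette).
exact/ER_adj_proper/(colour_orth_scale s_pchar sqr_i two_neq0 xi2_not_fixed).
Qed.
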